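(* Let $n\ge2$, let $v\in C^0(\mathbb R^n)$ be quasi-concave, and suppose $v\in C^\infty(U)$ for some domain $U\subset\mathbb R^n$. Then at every point of $U$, $$2\big[|D^2v\,Dv|^2-\Delta v\,\Delta_\infty v\big]\ \ge\ |Dv|^2\big[|D^2v|^2-(\Delta v)^2\big],$$ where $\Delta_\infty v=\langle D^2v\,Dv,Dv\rangle$ and $|D^2v|$ is the Frobenius norm.
   Context: A function $f\in C^0(\mathbb R^n)$ is quasi-concave if $f(\lambda x+(1-\lambda)y)\ge\min\{f(x),f(y)\}$ for all $x,y\in\mathbb R^n$, $\lambda\in[0,1]$; equivalently, every nonempty super level set $\{f>t\}$ is convex. *)

From HB Require Import structures.
From mathcomp Require Import all_boot all_order all_algebra.
From mathcomp Require Import all_classical all_reals all_analysis.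
Set Implicit Arguments. Unset Strict Implicit. Unset Printing Implicit Defensive.
Import Order.TTheory GRing.Theory Num.Theory.
Import numFieldNormedType.Exports.
Local Open Scope classical_set_scope.
Local Open Scope ring_scope.

Section Defs.
Variables (R : realType) (n : nat).
Notation V := 'rV[R]_n.

Definition basis_vec (i : 'I_n) : V := delta_mx 0 i.

Definition partial (i : 'I_n) (f : V -> R) : V -> R :=
  fun x => 'D_(basis_vec i) f x.

Fixpoint dpartials (s : seq 'I_n) (f : V -> R) : V -> R :=
  match s with
  | [::] => f
  | i :: s' => partial i (dpartials s' f)
  end.

Definition smooth_on (U : set V) (f : V -> R) : Prop :=
  forall (s : seq 'I_n) (x : V), U x ->
    {for x, continuous (dpartials s f)} /\
    (forall i : 'I_n, derivable (dpartials s f) x (basis_vec i)).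

Definition quasi_concave (f : V -> R) : Prop :=
  forall (x y : V) (l : R), 0 <= l <= 1 ->
    Num.min (f x) (f y) <= f (l *: x + (1 - l) *: y).

Definition domain (U : set V) : Prop := open U /\ connected U /\ U !=set0.

Definition grad (f : V -> R) (x : V) : V := \row_i partial i f x.
Definition hess (f : V -> R) (x : V) : 'M[R]_n :=
  \matrix_(i, j) partial i (partial j f) x.

Definition sqnorm_vec (u : V) : R := \sum_i (u 0 i) ^+ 2.
Definition frob2 (A : 'M[R]_n) : R := \sum_i \sum_j (A i j) ^+ 2.
Definition laplacian (f : V -> R) (x : V) : R := \tr (hess f x).
Definition inf_laplacian (f : V -> R) (x : V) : R :=
  (grad f x *m hess f x *m (grad f x)^T) 0 0.
Definition hess_grad (f : V -> R) (x : V) : V := (hess f x *m (grad f x)^T)^T.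
End Defs.

(* Quasi-concavity forces the Hessian H = D^2 v(x) to be negative semidefinite on
   the hyperplane orthogonal to p = Dv(x): if <H w, w> > 0 for some w orthogonal
   to p, then t |-> v (x + t w) has a strict local minimum at 0, whereas
   quasi-concavity gives v x >= min (v (x + t w)) (v (x - t w)).  H is symmetric
   by Schwarz's theorem.  With s = |p|^2 and P = s I - p^T p, the matrix
   N = P H P is then symmetric negative semidefinite on all of R^n, so its 2x2
   principal minors are nonnegative and (tr N)^2 >= tr (N^2); expanding both
   traces in terms of H and p yields s^3 times the claimed inequality. *)

From HB Require Import structures.
From mathcomp Require Import all_boot all_order all_algebra.
From mathcomp Require Import all_classical all_reals all_analysis.
From mathcomp Require Import ring lra.
Set Implicit Arguments. Unset Strict Implicit. Unset Printing Implicit Defensive.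
Import Order.TTheory GRing.Theory Num.Theory.
Import numFieldNormedType.Exports.
Local Open Scope classical_set_scope.
Local Open Scope ring_scope.

Local Notation form A u w := ((u *m A *m w^T) 0 0).

Section mean_value.
Variable R : realType.

Lemma MVT_from0 (F dF : R -> R) (a : R) : a != 0 ->
  (forall t : R, `|t| <= `|a| -> is_derive t 1 F (dF t)) ->
  exists c, [/\ 0 < c * a, `|c| < `|a| & F a - F 0 = a * dF c].
Proof.
move=> a_neq0 dF_F.
have contF t : `|t| <= `|a| -> {for t, continuous F}.
  move=> ta; apply: differentiable_continuous; apply/derivable1_diffP.
  by have [] := dF_F t ta.
have [a_gt0|a_le0] := ltP 0 a.
  have dF_0a t : t \in `]0, a[ -> is_derive t 1 F (dF t).
    by rewrite in_itv /= => /andP[t0 ta]; apply: dF_F; rewrite !gtr0_norm ?ltW.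
  have contF_0a : {within `[0, a], continuous F}.
    apply: continuous_in_subspaceT => t; rewrite inE /= in_itv /= => /andP[t0 ta].
    by apply: contF; rewrite (ger0_norm t0) (gtr0_norm a_gt0).
  have [c] := MVT a_gt0 dF_0a contF_0a.
  rewrite in_itv /= => /andP[c0 ca] ->; exists c.
  by rewrite mulr_gt0 // !gtr0_norm // subr0 mulrC.
have a_lt0 : a < 0 by rewrite lt_neqAle a_neq0.
have dF_a0 t : t \in `]a, 0[ -> is_derive t 1 F (dF t).
  by rewrite in_itv /= => /andP[ta t0]; apply: dF_F; rewrite !ltr0_norm // lerN2 ltW.
have contF_a0 : {within `[a, 0], continuous F}.
  apply: continuous_in_subspaceT => t; rewrite inE /= in_itv /= => /andP[ta t0].
  by apply: contF; rewrite (ltr0_norm a_lt0) (ler0_norm t0) lerN2.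
have [c] := MVT a_lt0 dF_a0 contF_a0.
rewrite in_itv /= => /andP[ac c0] E; exists c; split.
- by rewrite -mulrNN mulr_gt0 // oppr_gt0.
- by rewrite (ltr0_norm a_lt0) (ltr0_norm c0) ltrN2.
- by apply: oppr_inj; rewrite opprB E sub0r mulrN mulrC.
Qed.

Lemma MVT_from0_le (F dF : R -> R) (a : R) :
  (forall t : R, `|t| <= `|a| -> is_derive t 1 F (dF t)) ->
  exists2 c, `|c| <= `|a| & F a - F 0 = a * dF c.
Proof.
move=> dF_F; have [->|a_neq0] := eqVneq a 0.
  by exists 0; rewrite ?subrr ?mul0r.
by have [c [_ /ltW ca E]] := MVT_from0 a_neq0 dF_F; exists c.
Qed.

Lemma second_derivative_test (F dF : R -> R) (r q : R) :
  0 < r -> 0 < q -> dF 0 = 0 ->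
  (forall t : R, `|t| < r -> is_derive t 1 F (dF t)) -> is_derive (0 : R) 1 dF q ->
  exists2 t, 0 < t & F 0 < Num.min (F t) (F (- t)).
Proof.
move=> r_gt0 q_gt0 dF0 dF_F dF_dF.
have : (fun h => h^-1 *: ((dF \o shift 0) (h *: 1) - dF 0)) @ 0^' --> q.
  by case: dF_dF => ddF <-; exact: ddF.
move/cvgrPdist_lt => /(_ q q_gt0).
rewrite near_withinE => /nbhs_normP [d /= d_gt0 near_q].
have slope_gt0 c : c != 0 -> `|c| < d -> 0 < c^-1 * dF c.
  move=> c_neq0 cd; have := near_q c; rewrite /= sub0r normrN => /(_ cd c_neq0).
  rewrite dF0 subr0 addr0 -[c *: 1]/(c * 1) mulr1 => lt_q.
  have : q - c^-1 * dF c < q by apply: le_lt_trans (ler_norm _) lt_q.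
  by rewrite ltrBlDr ltrDl.
pose t := Num.min d r / 2.
have t_gt0 : 0 < t by rewrite divr_gt0 // lt_min d_gt0 r_gt0.
have t_lt : t < Num.min d r by rewrite ltr_pdivrMr // ltr_pMr ?ltr1n // lt_min d_gt0 r_gt0.
move: (t_lt); rewrite lt_min => /andP[td tr].
have F0_lt a : `|a| = t -> F 0 < F a.
  move=> a_t; have a_neq0 : a != 0 by rewrite -normr_eq0 a_t gt_eqF.
  have a_r : `|a| < r by rewrite a_t.
  have [c [ca_gt0 ca E]] := MVT_from0 a_neq0 (fun s sa => dF_F s (le_lt_trans sa a_r)).
  have c_neq0 : c != 0 by apply: contraTneq ca_gt0 => ->; rewrite mul0r ltxx.
  rewrite -subr_gt0 E (_ : a * dF c = (c * a) * (c^-1 * dF c)); last by field.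
  by rewrite mulr_gt0 // slope_gt0 // (lt_trans ca) // a_t.
by exists t; rewrite // lt_min !F0_lt // ?normrN gtr0_norm.
Qed.

End mean_value.

Section directional_calculus.
Variables (R : realType) (n : nat).
Notation V := 'rV[R]_n.
Notation e_ := (basis_vec R).

Lemma is_derive_line (f : V -> R) (z u : V) (t : R) :
  derivable f (z + t *: u) u ->
  is_derive t 1 (fun s => f (z + s *: u)) ('D_u f (z + t *: u)).
Proof.
have E : (fun h : R => h^-1 *: (((fun s => f (z + s *: u)) \o shift t) (h *: 1)
            - f (z + t *: u)))
  = (fun h : R => h^-1 *: ((f \o shift (z + t *: u)) (h *: u) - f (z + t *: u))).
  by apply/funext => h /=; rewrite scaler1 scalerDl addrCA addrA.
by move=> df; split; rewrite /derivable /derive E.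
Qed.

Lemma MVT_along (f : V -> R) (z u : V) (a : R) :
  (forall t : R, `|t| <= `|a| -> derivable f (z + t *: u) u) ->
  exists2 c : R, `|c| <= `|a| & f (z + a *: u) - f z = a * 'D_u f (z + c *: u).
Proof.
move=> df.
have [c ca E] := MVT_from0_le (F := fun s => f (z + s *: u))
  (dF := fun t => 'D_u f (z + t *: u)) (fun t ta => is_derive_line (df t ta)).
by exists c; rewrite // -E scale0r addr0.
Qed.

Lemma row_norm_le (u : V) (b : R) : 0 <= b -> (forall i, `|u 0 i| <= b) -> `|u| <= b.
Proof.
move=> b_ge0 ub; change (mx_norm u <= b); rewrite mx_normrE.
by apply/bigmax_leP; split => // -[i j] _ /=; rewrite (ord1 i).
Qed.

Lemma row_entry_le_norm (u : V) (i : 'I_n) : `|u 0 i| <= `|u|.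
Proof.
change (`|u 0 i| <= mx_norm u); rewrite mx_normrE.
by apply/bigmax_geP; right; exists (0, i).
Qed.

Lemma basis_vec_norm_le1 (k : 'I_n) : `|e_ k| <= 1.
Proof.
apply: row_norm_le => // j; rewrite mxE eqxx /=.
by case: (j == k); rewrite ?normr1 ?normr0.
Qed.

Definition coord_path (y w : V) (h : R) (k : nat) : V :=
  y + h *: \row_j (if (j < k)%N then w 0 j else 0).

Lemma coord_path0 (y w : V) (h : R) : coord_path y w h 0 = y.
Proof.
rewrite /coord_path (_ : \row_j _ = 0) ?scaler0 ?addr0 //.
by apply/rowP => j; rewrite !mxE.
Qed.

Lemma coord_pathn (y w : V) (h : R) : coord_path y w h n = y + h *: w.
Proof. by congr (_ + _ *: _); apply/rowP => j; rewrite !mxE ltn_ord. Qed.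

Lemma coord_pathS (y w : V) (h : R) (k : 'I_n) :
  coord_path y w h k.+1 = coord_path y w h k + (h * w 0 k) *: e_ k.
Proof.
apply/rowP => j; rewrite !mxE eqxx /=.
have [->|jk] := eqVneq j k; first by rewrite ltnSn ltnn mulr1 mulr0 addr0.
rewrite mulr0 addr0 ltnS leq_eqVlt.
by have /negbTE-> : nat_of_ord j != k by apply: contra jk => /eqP/val_inj->.
Qed.

Lemma coord_path_near (y w : V) (h : R) (k : 'I_n) (t : R) :
  `|t| <= `|h| * `|w| -> `|coord_path y w h k + t *: e_ k - y| <= `|h| * `|w|.
Proof.
move=> tk; apply: row_norm_le => [|j]; first by rewrite mulr_ge0.
rewrite /coord_path !mxE eqxx /= addrAC (addrAC (y 0 j)) subrr add0r.
have [->|jk] := eqVneq j k; first by rewrite ltnn mulr0 add0r mulr1.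
rewrite mulr0 addr0; case: ifP => _; last by rewrite mulr0 normr0 mulr_ge0.
by rewrite normrM ler_wpM2l // row_entry_le_norm.
Qed.

Lemma increment_sum_partials_le (f : V -> R) (y w : V) (h d e : R) :
  (forall z, `|z - y| < d -> forall k,
     derivable f z (e_ k) /\ `|partial k f z - partial k f y| <= e) ->
  `|h| * `|w| < d ->
  `|f (y + h *: w) - f y - h * \sum_k w 0 k * partial k f y|
    <= n%:R * (`|h| * `|w| * e).
Proof.
move=> near_y hw_d.
have step (k : 'I_n) : `|f (coord_path y w h k.+1) - f (coord_path y w h k)
                          - h * w 0 k * partial k f y| <= `|h| * `|w| * e.
  have hwk : `|h * w 0 k| <= `|h| * `|w|.
    by rewrite normrM ler_wpM2l // row_entry_le_norm.
  have near_k t : `|t| <= `|h * w 0 k| -> `|coord_path y w h k + t *: e_ k - y| < d.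
    by move=> tk; exact: le_lt_trans (coord_path_near _ _ (le_trans tk hwk)) hw_d.
  rewrite coord_pathS.
  have [c ck ->] := MVT_along (fun t tk => (near_y _ (near_k t tk) k).1).
  rewrite -mulrBr normrM; apply: ler_pM => //.
  exact: (near_y _ (near_k c ck) k).2.
have -> : f (y + h *: w) - f y - h * \sum_k w 0 k * partial k f y =
    \sum_(k < n) (f (coord_path y w h k.+1) - f (coord_path y w h k)
                  - h * w 0 k * partial k f y).
  rewrite sumrB mulr_sumr; congr (_ - _); last by apply: eq_bigr => k _; rewrite mulrA.
  rewrite -(big_mkord xpredT (fun k => f (coord_path y w h k.+1) - f (coord_path y w h k))).
  by rewrite telescope_sumr // coord_pathn coord_path0.
apply: le_trans (ler_norm_sum _ _ _) _; apply: le_trans (ler_sum _ (fun k _ => step k)) _.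
by rewrite sumr_const card_ord mulr_natl.
Qed.

Lemma is_derive_sum_partials (f : V -> R) (y w : V) (r : R) : 0 < r ->
  (forall z, `|z - y| < r -> forall k, derivable f z (e_ k)) ->
  (forall k, {for y, continuous (partial k f)}) ->
  is_derive y w f (\sum_k w 0 k * partial k f y).
Proof.
move=> r_gt0 df cont; set S := \sum_k _.
suff cvgS : (fun h : R => h^-1 *: ((f \o shift y) (h *: w) - f y)) @ 0^' --> S.
  by split; [apply/cvg_ex; exists S | exact: cvg_lim].
apply/cvgrPdist_le => eps eps_gt0.
pose e := eps / (n%:R * `|w| + 1).
have e_gt0 : 0 < e by rewrite divr_gt0 // ltr_pwDr // mulr_ge0.
have /nbhs_normP [d /= d_gt0 near_y] :
    \forall z \near y, forall k, `|partial k f y - partial k f z| <= e.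
  apply: (@filter_forall _ _ _ (nbhs y) _) => k.
  by move/cvgrPdist_le : (cont k); apply.
pose d' := Num.min d r.
have d'_gt0 : 0 < d' by rewrite lt_min d_gt0 r_gt0.
have w1_gt0 : 0 < `|w| + 1 by rewrite ltr_pwDr.
near=> h.
have h_neq0 : h != 0 by near: h; exact: nbhs_dnbhs_neq.
have hw_d' : `|h| * `|w| < d'.
  have : `|h| < d' / (`|w| + 1) by near: h; apply: dnbhs0_lt; rewrite divr_gt0.
  rewrite ltr_pdivlMr // => /(le_lt_trans _); apply.
  by rewrite ler_wpM2l // lerDl.
have near_d' z : `|z - y| < d' -> forall k,
    derivable f z (e_ k) /\ `|partial k f z - partial k f y| <= e.
  rewrite lt_min => /andP[zd zr] k; split; first exact: df.
  by rewrite distrC; apply: near_y; rewrite /= distrC.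
have incr := increment_sum_partials_le near_d' hw_d'.
have -> : S - h^-1 *: ((f \o shift y) (h *: w) - f y)
          = - h^-1 * (f (y + h *: w) - f y - h * S).
  by rewrite /= [h *: w + y]addrC -[h^-1 *: _]/(h^-1 * _); field.
rewrite normrM normrN normfV ler_pdivrMl ?normr_gt0 //; apply: le_trans incr _.
have e_def : e * (n%:R * `|w| + 1) = eps by rewrite divfK // gt_eqF // ltr_pwDr // mulr_ge0.
have := normr_ge0 h; have := normr_ge0 w; have : 0 <= n%:R :> R by [].
nra.
Unshelve. all: by end_near.
Qed.

Lemma is_derive_line_sum_partials (f : V -> R) (x w : V) (r t : R) :
  (forall z, `|z - x| < r -> forall k, derivable f z (e_ k)) ->
  (forall z, `|z - x| < r -> forall k, {for z, continuous (partial k f)}) ->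
  `|t| * `|w| < r ->
  is_derive t 1 (fun s => f (x + s *: w)) (\sum_k w 0 k * partial k f (x + t *: w)).
Proof.
move=> df cont tw_r; have tw_le : `|t *: w| <= `|t| * `|w| by rewrite normrZ.
have near_x z : `|z - (x + t *: w)| < r - `|t| * `|w| -> `|z - x| < r.
  move=> zr; have -> : z - x = z - (x + t *: w) + t *: w by rewrite opprD addrA addrNK.
  by apply: le_lt_trans (ler_normD _ _) _; rewrite -(subrK (`|t| * `|w|) r) ltr_leD.
have xtw_near : `|x + t *: w - x| < r.
  by rewrite addrAC subrr add0r; exact: le_lt_trans tw_r.
have r'_gt0 : 0 < r - `|t| * `|w| by rewrite subr_gt0.
have [dfw <-] := is_derive_sum_partials w r'_gt0
  (fun z zx k => df z (near_x z zx) k) (cont _ xtw_near).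
exact: is_derive_line.
Qed.

Definition second_difference (f : V -> R) (y : V) (i j : 'I_n) (h : R) : R :=
  f (y + h *: e_ i + h *: e_ j) - f (y + h *: e_ i) - f (y + h *: e_ j) + f y.

Lemma second_differenceC (f : V -> R) (y : V) (i j : 'I_n) (h : R) :
  second_difference f y i j h = second_difference f y j i h.
Proof.
by rewrite /second_difference [y + _ *: e_ j + _]addrAC (addrAC (f _)).
Qed.

Lemma basis_step2_near (y : V) (i j : 'I_n) (a b h : R) :
  `|a| <= `|h| -> `|b| <= `|h| -> `|y + a *: e_ i + b *: e_ j - y| <= 2 * `|h|.
Proof.
move=> ah bh; rewrite addrAC (addrAC y) subrr add0r.
apply: le_trans (ler_normD _ _) _; rewrite !normrZ.
have := basis_vec_norm_le1 i; have := basis_vec_norm_le1 j.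
have := normr_ge0 a; have := normr_ge0 b.
have := normr_ge0 (e_ i); have := normr_ge0 (e_ j).
nra.
Qed.

Lemma second_difference_MVT (f : V -> R) (y : V) (r : R) (i j : 'I_n) (h : R) :
  (forall z, `|z - y| < r ->
     derivable f z (e_ i) /\ derivable (partial i f) z (e_ j)) ->
  2 * `|h| < r ->
  exists2 P : V, `|P - y| <= 2 * `|h| &
    second_difference f y i j h = h ^+ 2 * partial j (partial i f) P.
Proof.
move=> df hr.
have near_y a b : `|a| <= `|h| -> `|b| <= `|h| -> `|y + a *: e_ i + b *: e_ j - y| < r.
  by move=> ah bh; exact: le_lt_trans (basis_step2_near _ _ _ ah bh) hr.
have h0 : `|0 : R| <= `|h| by rewrite normr0.
have df_j t : `|t| <= `|h| -> derivable f (y + h *: e_ j + t *: e_ i) (e_ i).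
  move=> th; apply: (df _ _).1.
  by have := near_y t h th (lexx _); rewrite [y + t *: e_ i + _]addrAC.
have df_0 t : `|t| <= `|h| -> derivable f (y + t *: e_ i) (e_ i).
  by move=> th; apply: (df _ _).1; have := near_y t 0 th h0; rewrite scale0r addr0.
(* mean value theorem for the difference of the two i-slices, then in direction j *)
have [c ch E] := MVT_from0_le
  (F := (fun s => f (y + h *: e_ j + s *: e_ i)) - (fun s => f (y + s *: e_ i)))
  (dF := fun t => 'D_(e_ i) f (y + h *: e_ j + t *: e_ i) - 'D_(e_ i) f (y + t *: e_ i))
  (fun t th => is_deriveB (is_derive_line (df_j t th)) (is_derive_line (df_0 t th))).
have [c' c'h E'] := @MVT_along (partial i f) (y + c *: e_ i) (e_ j) h
  (fun t th => (df _ (near_y c t ch th)).2).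
exists (y + c *: e_ i + c' *: e_ j); first exact: basis_step2_near.
move: E; rewrite !fctE !scale0r !addr0 => E.
rewrite /second_difference [y + h *: e_ i + _]addrAC.
rewrite (_ : forall a b c d : R, a - b - c + d = (a - b) - (c - d)); last by move=> *; ring.
by rewrite E [y + h *: e_ j + _]addrAC E' mulrA -expr2.
Qed.

Lemma second_difference_cvg (f : V -> R) (y : V) (r : R) (i j : 'I_n) : 0 < r ->
  (forall z, `|z - y| < r ->
     derivable f z (e_ i) /\ derivable (partial i f) z (e_ j)) ->
  {for y, continuous (partial j (partial i f))} ->
  (fun h => h ^- 2 * second_difference f y i j h) @ 0^' --> partial j (partial i f) y.
Proof.
move=> r_gt0 df cont; apply/cvgrPdist_le => e e_gt0.
move/cvgrPdist_le : cont => /(_ e e_gt0) /nbhs_normP [d /= d_gt0 near_y].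
have m_gt0 : 0 < Num.min d r by rewrite lt_min d_gt0 r_gt0.
near=> h.
have h_neq0 : h != 0 by near: h; exact: nbhs_dnbhs_neq.
have : 2 * `|h| < Num.min d r.
  have : `|h| < Num.min d r / 2 by near: h; apply: dnbhs0_lt; rewrite divr_gt0.
  by rewrite ltr_pdivlMr // mulrC.
rewrite lt_min => /andP[hd hr].
have [P Py ->] := second_difference_MVT df hr.
rewrite mulrA mulVf ?expf_neq0 // mul1r; apply: near_y.
by rewrite /= distrC; exact: le_lt_trans Py hd.
Unshelve. all: by end_near.
Qed.

Lemma partial_comm (f : V -> R) (y : V) (r : R) (i j : 'I_n) : 0 < r ->
  (forall z, `|z - y| < r -> forall k l,
     derivable f z (e_ k) /\ derivable (partial k f) z (e_ l)) ->
  {for y, continuous (partial j (partial i f))} ->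
  {for y, continuous (partial i (partial j f))} ->
  partial j (partial i f) y = partial i (partial j f) y.
Proof.
move=> r_gt0 df cont_ij cont_ji.
have cvg_ij := second_difference_cvg r_gt0 (fun z zy => df z zy i j) cont_ij.
have cvg_ji := second_difference_cvg r_gt0 (fun z zy => df z zy j i) cont_ji.
move: cvg_ji; rewrite (_ : (fun h => _) = (fun h => h ^- 2 * second_difference f y i j h)).
  exact: cvg_unique cvg_ij.
by apply/funext => h; rewrite second_differenceC.
Qed.

End directional_calculus.

Section quadratic_forms.
Variables (R : realFieldType) (n : nat).
Implicit Types (A : 'M[R]_n) (u w : 'rV[R]_n).

Lemma nonpos_quadratic_discr (a b c : R) : a <= 0 ->
  (forall t, t ^+ 2 * a + 2 * t * b + c <= 0) -> b ^+ 2 <= a * c.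
Proof.
move=> a_le0 q_le0; case: (ltgtP a 0) => [a_lt0|a_gt0|a_eq0]; last first.
- subst a; have [->|b_neq0] := eqVneq b 0; first by rewrite expr0n mul0r.
  have := q_le0 ((1 - c) / (2 * b)).
  rewrite mulr0 add0r (_ : 2 * _ * b = 1 - c); first lra.
  by field.
- by move: a_le0; rewrite leNgt a_gt0.
have := q_le0 (- b / a).
rewrite expr2 -mulrA divfK ?lt_eqF // => q.
have : 0 <= a * (- b / a * b + c) by rewrite mulr_le0 //; lra.
by rewrite mulrDr mulrA mulrCA divff ?lt_eqF //; lra.
Qed.

Lemma form_sym A u w : A^T = A -> form A u w = form A w u.
Proof.
move=> A_sym; have -> : form A u w = ((u *m A *m w^T)^T) 0 0 by rewrite [in RHS]mxE.
by rewrite !trmx_mul trmxK A_sym mulmxA.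
Qed.

Lemma form_expand A u w (t : R) : A^T = A ->
  form A (t *: u + w) (t *: u + w) =
  t ^+ 2 * form A u u + 2 * t * form A u w + form A w w.
Proof.
move=> A_sym; have := form_sym u w A_sym.
rewrite linearD /= linearZ /= !mulmxDl !mulmxDr -!scalemxAl -!scalemxAr !mxE => ->.
ring.
Qed.

Lemma form_delta A (i j : 'I_n) :
  form A (delta_mx 0 i : 'rV_n) (delta_mx 0 j : 'rV_n) = A i j.
Proof. by rewrite trmx_delta -rowE -colE !mxE. Qed.

Lemma nsd_entry_sqr_le A (i j : 'I_n) : A^T = A -> (forall w, form A w w <= 0) ->
  A i j ^+ 2 <= A i i * A j j.
Proof.
move=> A_sym A_nsd; rewrite -!form_delta.
by apply: nonpos_quadratic_discr => // t; rewrite -form_expand.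
Qed.

Lemma nsd_trace_sqr_le A : A^T = A -> (forall w, form A w w <= 0) ->
  \tr (A *m A) <= \tr A ^+ 2.
Proof.
move=> A_sym A_nsd; have Aji i j : A j i = A i j by rewrite -[in LHS]A_sym mxE.
rewrite -subr_ge0 /mxtrace expr2 mulr_suml.
have -> : \sum_i (A *m A) i i = \sum_i \sum_j A i j ^+ 2.
  by apply: eq_bigr => i _; rewrite mxE; apply: eq_bigr => j _; rewrite Aji expr2.
rewrite -sumrB; apply: sumr_ge0 => i _; rewrite mulr_sumr -sumrB.
by apply: sumr_ge0 => j _; rewrite subr_ge0 nsd_entry_sqr_le.
Qed.

End quadratic_forms.

Section tangent_projection.
Variables (R : realFieldType) (n : nat) (H : 'M[R]_n) (p : 'rV[R]_n).
Hypothesis H_sym : H^T = H.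
Hypothesis H_nsd_tangent : forall w : 'rV[R]_n, (w *m p^T) 0 0 = 0 -> form H w w <= 0.

Let s := (p *m p^T) 0 0.
(* [s] times the orthogonal projection onto the hyperplane orthogonal to [p] *)
Let P : 'M[R]_n := s%:M - p^T *m p.

Let ppT : p *m p^T = s%:M. Proof. exact: mx11_scalar. Qed.
Let P_p : P *m p^T = 0.
Proof. by rewrite mulmxBl mul_scalar_mx -mulmxA ppT mul_mx_scalar subrr. Qed.
Let P_sym : P^T = P. Proof. by rewrite linearB /= tr_scalar_mx trmx_mul trmxK. Qed.
Let P_sqr : P *m P = s *: P.
Proof. by rewrite {1}/P mulmxBr mul_mx_scalar mulmxA P_p mul0mx subr0. Qed.

Let tr_pT_mul (u : 'rV[R]_n) : \tr (p^T *m u) = (u *m p^T) 0 0.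
Proof. by rewrite mxtrace_mulC /mxtrace big_ord1. Qed.

Let tr_PHP : \tr (P *m H *m P) = s * (s * \tr H - form H p p).
Proof.
rewrite mxtrace_mulC mulmxA P_sqr -scalemxAl mxtraceZ; congr (_ * _).
by rewrite mulmxBl mul_scalar_mx linearB /= mxtraceZ -[p^T *m p *m H]mulmxA tr_pT_mul.
Qed.

Let tr_PHP_sqr : \tr (P *m H *m P *m (P *m H *m P)) =
  s ^+ 2 * (s ^+ 2 * \tr (H *m H) - 2 * s * form (H *m H) p p + form H p p ^+ 2).
Proof.
have -> : P *m H *m P *m (P *m H *m P) = P *m H *m (P *m P) *m H *m P.
  by rewrite !mulmxA.
rewrite P_sqr -scalemxAr -!scalemxAl mxtraceZ mxtrace_mulC !mulmxA P_sqr.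
rewrite -!scalemxAl mxtraceZ mulrA -expr2; congr (_ * _).
have PH : P *m H = s *: H - p^T *m (p *m H) by rewrite mulmxBl mul_scalar_mx mulmxA.
have -> : P *m H *m P *m H = P *m H *m (P *m H) by rewrite !mulmxA.
rewrite PH mulmxBl !mulmxBr !linearB /= -!scalemxAl -!scalemxAr !mxtraceZ.
have pHp : p *m H *m p^T = (form H p p)%:M by exact: mx11_scalar.
have trqH : \tr (p^T *m (p *m H) *m H) = form (H *m H) p p.
  by rewrite -[p^T *m _ *m H]mulmxA tr_pT_mul !mulmxA.
have trHq : \tr (H *m (p^T *m (p *m H))) = form (H *m H) p p.
  by rewrite mxtrace_mulC trqH.
have trqq : \tr (p^T *m (p *m H) *m (p^T *m (p *m H))) = form H p p ^+ 2.
  rewrite -[p^T *m _ *m _]mulmxA tr_pT_mul !mulmxA pHp mul_scalar_mx -!scalemxAl mxE.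
  by rewrite [in RHS]mxE eqxx mulr1n expr2.
rewrite trHq trqH trqq -[p *m H *m H]mulmxA; ring.
Qed.

Let PHP_sym : (P *m H *m P)^T = P *m H *m P.
Proof. by rewrite !trmx_mul P_sym H_sym mulmxA. Qed.

Let PHP_nsd (w : 'rV[R]_n) : form (P *m H *m P) w w <= 0.
Proof.
have -> : form (P *m H *m P) w w = form H (w *m P) (w *m P).
  by rewrite trmx_mul P_sym !mulmxA.
by apply: H_nsd_tangent; rewrite -mulmxA P_p mulmx0 mxE.
Qed.

Let s_sum : s = \sum_i p 0 i ^+ 2.
Proof. by rewrite /s mxE; apply: eq_bigr => i _; rewrite mxE expr2. Qed.

Lemma tangent_nsd_trace_ineq :
  s * (\tr (H *m H) - \tr H ^+ 2) <= 2 * (form (H *m H) p p - \tr H * form H p p).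
Proof.
have s_ge0 : 0 <= s by rewrite s_sum sumr_ge0 // => i _; exact: sqr_ge0.
have [s0|s_neq0] := eqVneq s 0.
  have p0 : p = 0.
    apply/rowP => i; apply/eqP; rewrite mxE -sqrf_eq0.
    move: s0; rewrite s_sum => /eqP; rewrite psumr_eq0 => [/allP|j _]; last exact: sqr_ge0.
    by move/(_ i (mem_index_enum _)).
  by rewrite s0 p0 !mul0mx !mxE mulr0 subr0 mulr0 mul0r.
have s_gt0 : 0 < s by rewrite lt_def s_neq0.
move: (nsd_trace_sqr_le PHP_sym PHP_nsd); rewrite tr_PHP tr_PHP_sqr -subr_ge0.
set F := \tr (H *m H); set T := \tr H; set D := form H p p; set A2 := form (H *m H) p p.
rewrite (_ : _ - _ = s ^+ 3 * (2 * (A2 - T * D) - s * (F - T ^+ 2))); last by ring.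
by rewrite pmulr_rge0 ?exprn_gt0 // subr_ge0.
Qed.

End tangent_projection.

Section hessian_inequality.
Variables (R : realType) (n : nat).

Lemma sqnorm_vecE (u : 'rV[R]_n) : sqnorm_vec u = (u *m u^T) 0 0.
Proof. by rewrite mxE; apply: eq_bigr => i _; rewrite mxE expr2. Qed.

Lemma frob2E (A : 'M[R]_n) : frob2 A = \tr (A *m A^T).
Proof. by apply: eq_bigr => i _; rewrite mxE; apply: eq_bigr => j _; rewrite mxE expr2. Qed.

Lemma sym_tangent_nsd_ineq (H : 'M[R]_n) (p : 'rV[R]_n) : H^T = H ->
  (forall w : 'rV[R]_n, (w *m p^T) 0 0 = 0 -> form H w w <= 0) ->
  sqnorm_vec p * (frob2 H - \tr H ^+ 2) <=
  2 * (sqnorm_vec ((H *m p^T)^T) - \tr H * form H p p).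
Proof.
move=> H_sym H_nsd; rewrite !sqnorm_vecE frob2E H_sym trmxK trmx_mul H_sym mulmxA.
by have := tangent_nsd_trace_ineq H_sym H_nsd; rewrite !mulmxA trmxK.
Qed.

End hessian_inequality.

Section quasi_concavity.
Variables (R : realType) (n : nat).
Notation V := 'rV[R]_n.
Notation e_ := (basis_vec R).

Lemma quasi_concave_min_le_mid (v : V -> R) (x w : V) (t : R) : quasi_concave v ->
  Num.min (v (x + t *: w)) (v (x - t *: w)) <= v x.
Proof.
move=> qc; have := qc (x + t *: w) (x - t *: w) (1 / 2).
rewrite (_ : 1 / 2 *: (x + t *: w) + _ = x).
  by apply; rewrite divr_ge0 //= ler_pdivrMr // mul1r ler1n.
by apply/rowP => i; rewrite !mxE; field.
Qed.

Lemma quasi_concave_hessian_tangent_le0 (v : V -> R) (x w : V) (r : R) :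
  0 < r -> quasi_concave v ->
  (forall z, `|z - x| < r -> forall k l,
     derivable v z (e_ k) /\ derivable (partial k v) z (e_ l)) ->
  (forall z, `|z - x| < r -> forall k, {for z, continuous (partial k v)}) ->
  (forall k l, {for x, continuous (partial l (partial k v))}) ->
  \sum_k w 0 k * partial k v x = 0 ->
  \sum_k w 0 k * \sum_l w 0 l * partial l (partial k v) x <= 0.
Proof.
move=> r_gt0 qc dv cont1 cont2 w_tangent; rewrite leNgt; apply/negP => q_gt0.
pose g : V -> R := \sum_k w 0 k \*: partial k v.
have gE z : g z = \sum_k w 0 k * partial k v z.
  by rewrite /g fct_sumE; apply: eq_bigr.
have dg : is_derive x w g (\sum_k w 0 k * \sum_l w 0 l * partial l (partial k v) x).
  apply: is_derive_sum => k; apply: is_deriveZ.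
  exact: (is_derive_sum_partials w r_gt0 (fun z zx l => (dv z zx k l).2) (cont2 k)).
have w1_gt0 : 0 < `|w| + 1 by rewrite ltr_pwDr.
have r'_gt0 : 0 < r / (`|w| + 1) by rewrite divr_gt0.
have dg_line : is_derive (0 : R) 1 (fun s => g (x + s *: w))
    (\sum_k w 0 k * \sum_l w 0 l * partial l (partial k v) x).
  case: dg => dgx <-; have := is_derive_line (f := g) (z := x) (u := w) (t := 0).
  by rewrite scale0r addr0; apply.
have g0 : g (x + 0 *: w) = 0 by rewrite scale0r addr0 gE.
have dv_line (s : R) : `|s| < r / (`|w| + 1) ->
    is_derive s 1 (fun s => v (x + s *: w)) (g (x + s *: w)).
  rewrite ltr_pdivlMr // gE => sr; apply: is_derive_line_sum_partials cont1 _.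
    by move=> z zx k; exact: (dv z zx k k).1.
  by apply: le_lt_trans sr; rewrite ler_wpM2l // lerDl.
have [t t_gt0] := second_derivative_test r'_gt0 q_gt0 g0 dv_line dg_line.
rewrite /= scale0r addr0 scaleNr => /lt_le_trans/(_ (quasi_concave_min_le_mid x w t qc)).
by rewrite ltxx.
Qed.

End quasi_concavity.

Theorem lemma6p1 (R : realType) (n : nat) (hn : (2 <= n)%N)
  (v : 'rV[R]_n -> R) (U : set 'rV[R]_n) :
  continuous v -> quasi_concave v -> domain U -> smooth_on U v ->
  forall x : 'rV[R]_n, U x ->
    2 * (sqnorm_vec (hess_grad v x) - laplacian v x * inf_laplacian v x)
    >= sqnorm_vec (grad v x) * (frob2 (hess v x) - (laplacian v x) ^+ 2).
Proof.
move=> _ qc [U_open _] v_smooth x Ux.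
have /nbhs_normP [r /= r_gt0 ball_U] : \forall z \near x, U z by apply: U_open.
have inU z : `|z - x| < r -> U z by move=> zx; apply: ball_U; rewrite /= distrC.
have dv z : `|z - x| < r -> forall k l : 'I_n,
    derivable v z (basis_vec R k) /\ derivable (partial k v) z (basis_vec R l).
  move=> zx k l; split; first exact: (v_smooth [::] z (inU z zx)).2.
  exact: (v_smooth [:: k] z (inU z zx)).2.
have cont1 z : `|z - x| < r -> forall k, {for z, continuous (partial k v)}.
  by move=> zx k; exact: (v_smooth [:: k] z (inU z zx)).1.
have cont2 k l : {for x, continuous (partial l (partial k v))}.
  exact: (v_smooth [:: l; k] x Ux).1.
have hess_sym : (hess v x)^T = hess v x.
  by apply/matrixP => i j; rewrite !mxE (partial_comm r_gt0 dv).
apply: sym_tangent_nsd_ineq => // w w_tangent.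
have -> : form (hess v x) w w =
    \sum_k w 0 k * \sum_l w 0 l * partial l (partial k v) x.
  rewrite mxE; apply: eq_bigr => k _; rewrite !mxE mulrC.
  by congr (_ * _); apply: eq_bigr => l _; rewrite !mxE.
apply: (quasi_concave_hessian_tangent_le0 r_gt0 qc dv cont1 cont2).
by rewrite -[RHS]w_tangent mxE; apply: eq_bigr => k _; rewrite !mxE.
Qed.
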